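(* Every pairwise social choice correspondence that satisfies set non-imposition, homogeneity, and strategyproofness is strongly Condorcet-consistent.
   Context: Let $A$ be a finite set of alternatives; a preference profile $R$ assigns a strict total order $\succ_i$ on $A$ to each voter $i$ of a finite non-empty electorate $N\subseteq\{1,2,\dots\}$; $\mathcal{R}^*(A)$ is the set of all profiles over all electorates. $g_R(x,y)=|\{i: x\succ_i y\}|-|\{i: y\succ_i x\}|$; $x\succ_R y$ iff $g_R(x,y)>0$. A Condorcet winner is $x$ with $x\succ_R y$ for all $y\ne x$. An SCC is $f:\mathcal{R}^*(A)\to 2^A\setminus\{\emptyset\}$; pairwise: $f(R)=f(R')$ whenever $g_R=g_{R'}$; set non-imposing: for every non-empty $X\subseteq A$ some profile has $f(R)=X$; homogeneous: $f(kR)=f(R)$ for $k$ copies $kR$ of $R$; strongly Condorcet-consistent: $f(R)=\{x\}$ iff $x$ is the Condorcet winner in $R$. Fishburn's extension: for $X\ne Y$, $X\succ_i^F Y$ iff $x\succ_i y$ for all $x\in X\setminus Y,y\in Y$ and for all $x\in X,y\in Y\setminus X$; $f$ is strategyproof if no voter $i$ can change only his own preference to move from $R$ to $R'$ with $f(R')\succ_i^F f(R)$. *)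

From mathcomp Require Import all_boot all_order all_algebra.
Set Implicit Arguments. Unset Strict Implicit. Unset Printing Implicit Defensive.

Definition strict_total_order (A : finType) (r : rel A) : Prop :=
  [/\ (forall x, ~~ r x x),
      (forall x y z, r x y -> r y z -> r x z) &
      (forall x y, x != y -> r x y || r y x)].

(* Raw profile data: the electorate (listed increasingly) and each voter's
   preference relation ([pref i x y] means x >_i y). *)
Record profile (A : finType) := Profile {
  voters : seq nat;
  pref : nat -> rel A
}.

(* A genuine preference profile: a finite non-empty electorate N of positive
   integers (represented canonically as a strictly increasing list), a strict
   total order for each voter of N, and (canonical normalisation) the empty
   relation for non-voters. *)
Definition valid_profile (A : finType) (R : profile A) : Prop :=
  [/\ sorted ltn (voters R),
      voters R != [::],
      0 \notin voters R,
      (forall i, i \in voters R -> strict_total_order (pref R i)) &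
      (forall i, i \notin voters R -> forall x y, pref R i x y = false)].

Definition margin (A : finType) (R : profile A) (x y : A) : int :=
  (count (fun i => pref R i x y) (voters R))%:Z
  - (count (fun i => pref R i y x) (voters R))%:Z.

Definition majority_pref (A : finType) (R : profile A) (x y : A) : Prop :=
  (0 < margin R x y)%R.

Definition condorcet_winner (A : finType) (R : profile A) (x : A) : Prop :=
  forall y, y != x -> majority_pref R x y.

(* k copies of R: with m = max N, voters 1..k*m, voter v being a copy of the
   original voter ((v-1) mod m) + 1 whenever that voter belongs to N. *)
Definition orig_voter (m v : nat) : nat := ((v.-1) %% m).+1.

Definition copies (A : finType) (k : nat) (R : profile A) : profile A :=
  let m := \max_(i <- voters R) i in
  let N' := [seq v <- iota 1 (k * m) | orig_voter m v \in voters R] in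
  Profile N' (fun v x y => (v \in N') && pref R (orig_voter m v) x y).

Definition fishburn (A : finType) (r : rel A) (X Y : {set A}) : Prop :=
  [/\ X != Y,
      (forall x y, x \in X :\: Y -> y \in Y -> r x y) &
      (forall x y, x \in X -> y \in Y :\: X -> r x y)].

(* Social choice correspondences: values on genuine profiles are non-empty;
   values on non-profiles are irrelevant. *)
Definition is_SCC (A : finType) (f : profile A -> {set A}) : Prop :=
  forall R, valid_profile R -> f R != set0.

Definition pairwise_SCC (A : finType) (f : profile A -> {set A}) : Prop :=
  forall R R', valid_profile R -> valid_profile R' ->
    (forall x y, margin R x y = margin R' x y) -> f R = f R'.

Definition set_non_imposing (A : finType) (f : profile A -> {set A}) : Prop :=
  forall X : {set A}, X != set0 -> exists R, valid_profile R /\ f R = X.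

Definition homogeneous (A : finType) (f : profile A -> {set A}) : Prop :=
  forall R k, valid_profile R -> 0 < k -> f (copies k R) = f R.

Definition strategyproof (A : finType) (f : profile A -> {set A}) : Prop :=
  forall R R' i, valid_profile R -> valid_profile R' ->
    voters R' = voters R -> i \in voters R ->
    (forall j, j != i -> pref R' j = pref R j) ->
    ~ fishburn (pref R i) (f R') (f R).

Definition strongly_condorcet_consistent (A : finType)
    (f : profile A -> {set A}) : Prop :=
  forall R, valid_profile R ->
    forall x, f R = [set x] <-> condorcet_winner R x.

(* Add to a profile two voters with mutually reverse rankings: no margin
   changes.  If one of them then swaps two adjacent alternatives a, b, exactly
   the margin of (a, b) moves, by 2.  When x is the unique winner and the
   swapping voter ranks x last, strategyproofness keeps the outcome at {x};
   hence x stays the unique winner whenever its margins only grow (homogeneity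
   doubles both profiles so that the parities match, pairwiseness transfers the
   outcome).  Comparing with a profile whose outcome is {x} (set
   non-imposition), a Condorcet winner x is the unique winner.
   Conversely, let f R = {x} while x does not beat y.  Starting from a profile
   with outcome {x, y}, a voter ranking x, y last and then first can raise both
   above every other alternative without changing the outcome.  Then either y
   becomes a Condorcet winner, or x's margins dominate those in R: both force a
   singleton outcome. *)

From mathcomp Require Import all_boot all_order all_algebra zify.
Import GRing.Theory Num.Theory Order.TTheory.
Set Implicit Arguments. Unset Strict Implicit. Unset Printing Implicit Defensive.

Section Orders.
Variable A : finType.
Implicit Types (r : rel A) (s : seq A) (a b u v x : A).

Lemma sto_asym r u v : strict_total_order r -> r u v -> ~~ r v u.
Proof. by case=> irr tr _ ruv; apply/negP => /(tr _ _ _ ruv); rewrite (negbTE (irr u)). Qed.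

Definition converse r : rel A := fun u v => r v u.

Lemma converse_sto r : strict_total_order r -> strict_total_order (converse r).
Proof.
case=> irr tr tot; split => // [u v w ruv rvw | u v uv]; first exact: tr rvw ruv.
by rewrite /converse orbC tot.
Qed.

(* Earlier in [s] is better. *)
Definition seq_order s : rel A := fun u v => index u s < index v s.

Lemma seq_order_sto s : (forall u, u \in s) -> strict_total_order (seq_order s).
Proof.
move=> s_full; split=> [u|u v w|u v uv]; rewrite /seq_order ?ltnn //; first exact: ltn_trans.
rewrite -neq_ltn; apply: contra uv => /eqP e.
by rewrite -(nth_index u (s_full u)) e nth_index.
Qed.

Definition bottom_order s : rel A :=
  seq_order ([seq w <- enum A | w \notin s] ++ s).

Lemma mem_bottom_order_prefix s u :
  (u \in [seq w <- enum A | w \notin s]) = (u \notin s).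
Proof. by rewrite mem_filter mem_enum andbT. Qed.

Lemma bottom_order_sto s : strict_total_order (bottom_order s).
Proof.
by apply: seq_order_sto => u; rewrite mem_cat mem_bottom_order_prefix; case: (u \in s).
Qed.

Lemma bottom_order_out s u v : u \notin s -> v \in s -> bottom_order s u v.
Proof.
move=> us vs; rewrite /bottom_order /seq_order !index_cat !mem_bottom_order_prefix.
by rewrite us vs /= ltn_addr // index_mem mem_bottom_order_prefix.
Qed.

Lemma bottom_order_in s u v :
  u \in s -> v \in s -> bottom_order s u v = (index u s < index v s).
Proof.
move=> us vs; rewrite /bottom_order /seq_order !index_cat !mem_bottom_order_prefix.
by rewrite us vs /= ltn_add2l.
Qed.

Lemma bottom_order2_last a b u : a != b -> u != b -> bottom_order [:: a; b] u b.
Proof.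
move=> ab ub; have [-> | ua] := eqVneq u a.
  by rewrite bottom_order_in ?inE ?eqxx ?orbT //= eqxx (negbTE ab).
by apply: bottom_order_out; rewrite ?inE ?eqxx ?orbT // negb_or ua.
Qed.

Lemma bottom_order2_out a b u : u != a -> u != b -> bottom_order [:: a; b] u a.
Proof. by move=> ua ub; apply: bottom_order_out; rewrite ?inE ?eqxx // negb_or ua. Qed.

(* [a = x] is allowed: [index] ignores the duplicate. *)
Lemma bottom_order3_last a b x u :
  b != a -> b != x -> u != x -> bottom_order [:: b; a; x] u x.
Proof.
move=> ba bx ux; have xs : x \in [:: b; a; x] by rewrite !inE eqxx !orbT.
have [us | us] := boolP (u \in [:: b; a; x]); last exact: bottom_order_out.
rewrite bottom_order_in //= (negbTE bx) eqxx.
move: us ux; rewrite !inE => /or3P[]/eqP->; rewrite ?eqxx //.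
by rewrite (negbTE ba) => /negbTE->.
Qed.

Definition contrib r u v : int := (r u v : nat)%:Z - (r v u : nat)%:Z.

Definition skew_unit a b u v : int :=
  ((u, v) == (a, b) : nat)%:Z - ((u, v) == (b, a) : nat)%:Z.

Lemma contrib_skew r u v : contrib r u v = (- contrib r v u)%R.
Proof. by rewrite /contrib opprB. Qed.

Lemma contrib_converse r u v : contrib (converse r) u v = (- contrib r u v)%R.
Proof. by rewrite /contrib /converse opprB. Qed.

Lemma contrib_pref r u v : strict_total_order r -> r u v -> contrib r u v = 1%R.
Proof. by move=> sr ruv; rewrite /contrib ruv (negbTE (sto_asym sr ruv)). Qed.

Lemma contrib_pref_opp r u v : strict_total_order r -> r v u -> contrib r u v = (-1)%R.
Proof. by move=> sr rvu; rewrite contrib_skew (contrib_pref sr rvu). Qed.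

Lemma skew_unit_skew a b u v : skew_unit a b u v = (- skew_unit a b v u)%R.
Proof. by rewrite /skew_unit opprB !xpair_eqE andbC [(v == a) && _]andbC. Qed.

Lemma contrib_bottom_order_swap a b s u v : a != b ->
  contrib (bottom_order [:: a, b & s]) u v
  = (contrib (bottom_order [:: b, a & s]) u v + 2 * skew_unit a b u v)%R.
Proof.
move=> ab; have ba : b != a by rewrite eq_sym.
rewrite /contrib /skew_unit /bottom_order /seq_order !xpair_eqE.
have -> : [seq w <- enum A | w \notin [:: a, b & s]]
        = [seq w <- enum A | w \notin [:: b, a & s]].
  by apply: eq_filter => w; rewrite !inE orbCA.
have := mem_bottom_order_prefix [:: b, a & s].
set t := [seq w <- _ | _]; clearbody t => mem_t.
set L1 := t ++ _; set L2 := t ++ _.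
have idx w : w != a -> w != b -> index w L1 = index w L2 /\
    (index w L1 < size t \/ (size t).+1 < index w L1).
  move=> wa wb; rewrite !index_cat /= !(eq_sym a) !(eq_sym b) (negbTE wa) (negbTE wb).
  by split=> //; case: ifP => [wt|_]; [left; rewrite index_mem | right; lia].
have [a1 a2] : index a L1 = size t /\ index a L2 = (size t).+1.
  by rewrite !index_cat mem_t !inE eqxx orbT /= eqxx (negbTE ba) addn0 addn1.
have [b1 b2] : index b L1 = (size t).+1 /\ index b L2 = size t.
  by rewrite !index_cat mem_t !inE eqxx /= eqxx (negbTE ab) addn0 addn1.
have [-> | ua] := eqVneq u a; [| have [-> | ub] := eqVneq u b];
(have [-> | va] := eqVneq v a; [| have [-> | vb] := eqVneq v b]);
rewrite ?eqxx ?(negbTE ab) ?(negbTE ba) /=;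
try rewrite (negbTE ua); try rewrite (negbTE ub); try rewrite (negbTE va);
try rewrite (negbTE vb); rewrite ?andbF ?andFb;
try (have [e1 o1] := idx u ua ub); try (have [e2 o2] := idx v va vb); lia.
Qed.

Lemma fishburn_bottom r x (Y : {set A}) :
  (forall u, u != x -> r u x) -> Y != [set x] -> fishburn r Y [set x].
Proof.
move=> x_bot Yx; split=> // [u v | u v uY].
  by rewrite in_setD in_set1 => /andP[ux _] /set1P ->; exact: x_bot.
rewrite in_setD in_set1 => /andP[xY /eqP v_x]; rewrite v_x in xY *; apply: x_bot.
by apply: contraNneq xY => <-.
Qed.

Lemma set2_eq1 x y (z : A) : [set x; y] = [set z] -> x = y.
Proof.
by move=> e; have := set21 x y; have := set22 x y; rewrite e !in_set1 => /eqP -> /eqP ->.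
Qed.

End Orders.

Section Profiles.
Variable A : finType.
Implicit Types (P R : profile A) (r : rel A) (u v : A).

Lemma margin_skew R u v : margin R u v = (- margin R v u)%R.
Proof. by rewrite /margin opprB. Qed.

Lemma margin_diag R u : margin R u u = 0%R.
Proof. exact: subrr. Qed.

Lemma margin_le_size R u v : (margin R u v <= (size (voters R))%:Z)%R.
Proof. by rewrite /margin; have := count_size (fun i => pref R i u v) (voters R); lia. Qed.

Lemma voters_gt0 R : valid_profile R -> 0 < size (voters R).
Proof. by case=> _ + _ _ _; case: (voters R). Qed.

Definition max_voter P := \max_(i <- voters P) i.

Lemma leq_max_voter P i : i \in voters P -> i <= max_voter P.
Proof. by move=> iP; apply: (@leq_bigmax_seq _ _ xpredT id). Qed.

Definition add_voter P r : profile A :=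
  Profile (rcons (voters P) (max_voter P).+1)
          (fun i => if i == (max_voter P).+1 then r else pref P i).

Lemma add_voter_valid P r :
  valid_profile P -> strict_total_order r -> valid_profile (add_voter P r).
Proof.
case=> sortP _ P0 stoP nvP sr; split=> /=.
- rewrite (sorted_pairwise ltn_trans) pairwise_rcons -(sorted_pairwise ltn_trans) sortP.
  by rewrite andbT; apply/allP => i /leq_max_voter.
- by case: (voters P).
- by rewrite mem_rcons inE negb_or P0.
- by move=> i; rewrite mem_rcons inE; case: eqP => // _ /stoP.
- by move=> i; rewrite mem_rcons inE negb_or => /andP[/negbTE -> /nvP].
Qed.

Lemma margin_add_voter P r u v :
  margin (add_voter P r) u v = (margin P u v + contrib r u v)%R.
Proof.
have old x y : count (fun i => (if i == (max_voter P).+1 then r else pref P i) x y) (voters P)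
             = count (fun i => pref P i x y) (voters P).
  by apply: eq_in_count => i /leq_max_voter iP; rewrite ltn_eqF // ltnS.
rewrite /margin /contrib /= -!cats1 !count_cat /= !old eqxx; lia.
Qed.

Lemma orig_voter_shift k m s : 0 < s <= m -> orig_voter m (k * m + s) = s.
Proof.
by case: s => // s /andP[_ s_lt]; rewrite /orig_voter addnS /= modnMDl modn_small.
Qed.

Lemma count_orig_voter k m (N : seq nat) (p : pred nat) :
  (forall i, i \in N -> 0 < i <= m) -> uniq N -> (forall i, i \notin N -> ~~ p i) ->
  count (p \o orig_voter m) (iota 1 (k * m)) = k * count p N.
Proof.
move=> N_range N_uniq p_N.
have count_block : count p (iota 1 m) = count p N.
  transitivity (count p [seq i <- iota 1 m | i \in N]).
    rewrite count_filter; apply: eq_count => i /=.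
    by case: (boolP (i \in N)) => [|/p_N/negbTE ->]; rewrite ?andbT ?andbF.
  apply/permP/uniq_perm; rewrite ?filter_uniq ?iota_uniq // => i.
  rewrite mem_filter mem_iota; case: (boolP (i \in N)) => //= /N_range; lia.
elim: k => [|k IHk]; first by rewrite mul0n.
rewrite mulSnr iotaD count_cat IHk [RHS]mulSnr (addnC 1) iotaDl count_map.
congr (_ + _); rewrite -count_block; apply: eq_in_count => s; rewrite mem_iota => s_range /=.
by rewrite orig_voter_shift //; lia.
Qed.

Lemma valid_voter_range R i :
  valid_profile R -> i \in voters R -> 0 < i <= max_voter R.
Proof.
case=> _ _ R0 _ _ iR; rewrite leq_max_voter // andbT lt0n.
by apply: contraNneq R0 => <-.
Qed.

Lemma valid_voters_uniq R : valid_profile R -> uniq (voters R).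
Proof. by case; rewrite ltn_sorted_uniq_leq => /andP[]. Qed.

Lemma count_pref_copies k R u v : valid_profile R ->
  count (fun i => pref (copies k R) i u v) (voters (copies k R))
  = k * count (fun i => pref R i u v) (voters R).
Proof.
move=> vR; have [_ _ _ _ nvR] := vR.
rewrite /copies -/(max_voter R) /=.
rewrite (eq_in_count (a2 := fun i => pref R (orig_voter (max_voter R) i) u v)) => [|i -> //].
rewrite count_filter.
transitivity (count ((fun i => pref R i u v) \o orig_voter (max_voter R))
                    (iota 1 (k * max_voter R))).
  by apply: eq_count => i /=; case: (boolP (_ \in _)) => [|/nvR ->]; rewrite ?andbT.
apply: count_orig_voter => [i || i /nvR -> //]; first exact: valid_voter_range.
exact: valid_voters_uniq.
Qed.

Lemma margin_copies k R u v :
  valid_profile R -> margin (copies k R) u v = (k%:Z * margin R u v)%R.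
Proof. by move=> vR; rewrite /margin !count_pref_copies // !PoszM mulrBr. Qed.

Lemma copies_valid k R : valid_profile R -> 0 < k -> valid_profile (copies k R).
Proof.
move=> vR k_gt0; have [_ nonempty _ stoR _] := vR.
rewrite /copies -/(max_voter R); split=> /=.
- exact: (sorted_filter ltn_trans _ (iota_ltn_sorted 1 _)).
- have [i0 i0R] : exists i0, i0 \in voters R.
    by case: (voters R) nonempty => // i0 s _; exists i0; exact: mem_head.
  have i0_range := valid_voter_range vR i0R.
  have ov_i0 : orig_voter (max_voter R) i0 = i0.
    by have := orig_voter_shift 0 i0_range; rewrite mul0n add0n.
  apply/eqP => /(congr1 (fun N => i0 \in N)).
  rewrite mem_filter ov_i0 i0R mem_iota in_nil /=; move: i0_range.
  by have := leq_pmull (max_voter R) k_gt0; lia.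
- by rewrite mem_filter mem_iota andbF.
- by move=> i iN; rewrite iN; apply: stoR; move: iN; rewrite mem_filter => /andP[].
- by move=> i /negbTE ->.
Qed.

End Profiles.

Definition abs_sum (A : finType) (E : A -> A -> int) : nat :=
  \sum_(p : A * A) absz (E p.1 p.2).

Lemma abs_sum_sub_skew_unit (A : finType) (E : A -> A -> int) a b :
  (forall u v, E u v = - E v u)%R -> (0 < E a b)%R ->
  abs_sum (fun u v => E u v - skew_unit a b u v)%R < abs_sum E.
Proof.
move=> E_skew Eab_gt0.
have ab : a != b by apply: contraTneq Eab_gt0 => <-; have := E_skew a a; lia.
rewrite /abs_sum (bigD1 (a, b)) //= [X in _ < X](bigD1 (a, b)) //= -addSn.
rewrite /skew_unit eqxx xpair_eqE (negbTE ab) /=; apply: leq_add; first lia.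
apply: leq_sum => -[u v] /= /negbTE ->; case: eqP => [[-> ->]|_] /=; last lia.
by rewrite E_skew; lia.
Qed.

Section Strategyproofness.
Variables (A : finType) (f : profile A -> {set A}).
Hypotheses (f_pw : pairwise_SCC f) (f_sp : strategyproof f).
Implicit Types (P Q : profile A) (r : rel A) (a b x y : A).

Lemma add_voter_sp P r r' :
  valid_profile P -> strict_total_order r -> strict_total_order r' ->
  ~ fishburn r (f (add_voter P r')) (f (add_voter P r)).
Proof.
move=> vP sr sr'; have := @f_sp (add_voter P r) (add_voter P r') (max_voter P).+1.
rewrite /= eqxx; apply; [exact: add_voter_valid | exact: add_voter_valid | by [] | |].
- by rewrite mem_rcons mem_head.
- by move=> j /negbTE ->.
Qed.

Lemma add_voter_keep_singleton P r r' x :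
  valid_profile P -> strict_total_order r -> strict_total_order r' ->
  (forall u, u != x -> r u x) ->
  f (add_voter P r) = [set x] -> f (add_voter P r') = [set x].
Proof.
move=> vP sr sr' x_bot fx; apply/eqP/negPn/negP => Yx.
by apply: (add_voter_sp vP sr sr'); rewrite fx; exact: fishburn_bottom.
Qed.

(* If the new outcome Y contains y but not x, the voter with ranking [r]
   gains by reporting [r']; otherwise the voter with ranking [r'] gains by
   reporting [r]. *)
Lemma add_voter_keep_pair P r r' x y :
  valid_profile P -> strict_total_order r -> strict_total_order r' -> x != y ->
  (forall u, u != x -> r u x) -> (forall u, u != x -> u != y -> r u y) ->
  (forall u, u != y -> r' y u) -> (forall u, u != x -> u != y -> r' x u) ->
  f (add_voter P r) = [set x; y] -> f (add_voter P r') = [set x; y].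
Proof.
move=> vP sr sr' xy x_bot y_bot y_top x_top fxy.
apply/eqP/negPn/negP; set Y := f _ => Yxy.
have [/andP[yY xY] | not_yx] := boolP ((y \in Y) && (x \notin Y)).
  apply: (add_voter_sp vP sr sr'); rewrite fxy; split=> // [u v | u v uY].
    rewrite in_setD !inE negb_or => /andP[/andP[ux uy] _] /orP[]/eqP ->.
      exact: x_bot.
    exact: y_bot.
  rewrite in_setD !inE => /andP[vY /orP[]/eqP v_eq]; rewrite v_eq in vY *.
    by apply: x_bot; apply: contraNneq xY => <-.
  by rewrite yY in vY.
apply: (add_voter_sp vP sr' sr); rewrite fxy; split=> [|u v|u v]; first by rewrite eq_sym.
  rewrite in_setD !inE => /andP[uY /orP[]/eqP u_eq] vY; rewrite u_eq in uY *.
    apply: x_top; first by apply: contraNneq uY => <-.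
    by apply: contraNneq not_yx => v_eq; rewrite -v_eq vY uY.
  by apply: y_top; apply: contraNneq uY => <-.
rewrite !inE => /orP[]/eqP -> /andP[/norP[vx vy] _]; first exact: x_top.
by apply: y_top.
Qed.

Lemma singleton_shift_skew_unit P x a b :
  valid_profile P -> f P = [set x] -> a != b -> b != x ->
  exists P', [/\ valid_profile P', f P' = [set x] &
    forall u v, margin P' u v = (margin P u v + 2 * skew_unit a b u v)%R].
Proof.
move=> vP fx ab bx; have ba : b != a by rewrite eq_sym.
have sr := bottom_order_sto [:: b; a; x].
have vP0 := add_voter_valid vP (converse_sto sr).
have fP0 : f (add_voter (add_voter P (converse (bottom_order [:: b; a; x])))
                        (bottom_order [:: b; a; x])) = [set x].
  rewrite -fx; apply: f_pw => // [|u v]; first exact: add_voter_valid.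
  by rewrite !margin_add_voter contrib_converse addrNK.
exists (add_voter (add_voter P (converse (bottom_order [:: b; a; x])))
                  (bottom_order [:: a; b; x])); split.
- exact/add_voter_valid/bottom_order_sto.
- apply: add_voter_keep_singleton fP0 => //; first exact: bottom_order_sto.
  by move=> u; apply: bottom_order3_last.
- move=> u v; rewrite !margin_add_voter contrib_converse.
  by rewrite (contrib_bottom_order_swap [:: x] u v ab) addrA addrNK.
Qed.

Lemma singleton_shift x (E : A -> A -> int) P :
  (forall u v, E u v = - E v u)%R -> (forall w, 0 <= E x w)%R ->
  valid_profile P -> f P = [set x] ->
  exists P', [/\ valid_profile P', f P' = [set x] &
    forall u v, margin P' u v = (margin P u v + 2 * E u v)%R].
Proof.
have [n] := ubnP (abs_sum E); elim: n => // n IHn in E P *.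
rewrite ltnS => sizeE E_skew Ex_ge0 vP fx.
have [[a b] /= Eab_gt0 | E_le0] := pickP (fun p : A * A => 0 < E p.1 p.2)%R; last first.
  exists P; split=> // u v.
  by have := E_le0 (u, v); have := E_le0 (v, u); have := E_skew u v; rewrite /=; lia.
have ab : a != b by apply: contraTneq Eab_gt0 => <-; have := E_skew a a; lia.
have bx : b != x by apply: contraTneq Eab_gt0 => ->; have := Ex_ge0 a; rewrite E_skew; lia.
have [P1 [vP1 fP1 mP1]] := singleton_shift_skew_unit vP fx ab bx.
have [|||P' [vP' fP' mP']] := IHn (fun u v => E u v - skew_unit a b u v)%R P1 _ _ _ vP1 fP1.
- exact: leq_trans (abs_sum_sub_skew_unit E_skew Eab_gt0) sizeE.
- by move=> u v; rewrite (E_skew u v) (skew_unit_skew a b u v); lia.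
- move=> w; have := Ex_ge0 w; rewrite /skew_unit !xpair_eqE (eq_sym x b) (negbTE bx).
  have [xa|_] := eqVneq x a; have [wb|_] := eqVneq w b; rewrite /= ?andbF; try lia.
  by rewrite xa wb; lia.
exists P'; split=> // u v; rewrite mP' mP1; lia.
Qed.

Lemma pair_boost Q x y :
  valid_profile Q -> x != y -> f Q = [set x; y] ->
  exists Q', [/\ valid_profile Q', f Q' = [set x; y],
    margin Q' x y = margin Q x y &
    forall w, w != x -> w != y ->
      margin Q' x w = (margin Q x w + 2)%R /\ margin Q' y w = (margin Q y w + 2)%R].
Proof.
move=> vQ xy fxy; have yx : y != x by rewrite eq_sym.
have sr := bottom_order_sto [:: y; x].
have vQ0 := add_voter_valid vQ (converse_sto sr).
have fQ0 : f (add_voter (add_voter Q (converse (bottom_order [:: y; x])))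
                        (bottom_order [:: y; x])) = [set x; y].
  rewrite -fxy; apply: f_pw => // [|u v]; first exact: add_voter_valid.
  by rewrite !margin_add_voter contrib_converse addrNK.
have below (s : seq A) u v :
    bottom_order s v u -> contrib (bottom_order s) u v = (-1)%R.
  exact/contrib_pref_opp/bottom_order_sto.
exists (add_voter (add_voter Q (converse (bottom_order [:: y; x])))
                  (converse (bottom_order [:: x; y]))); split.
- exact/add_voter_valid/converse_sto/bottom_order_sto.
- apply: add_voter_keep_pair fQ0 => //; first exact/converse_sto/bottom_order_sto.
  + by move=> u; apply: bottom_order2_last.
  + by move=> u ux uy; apply: bottom_order2_out.
  + by move=> u; apply: bottom_order2_last.
  + by move=> u ux uy; apply: bottom_order2_out.
(* Bounded rewriting: [bottom_order s] unifies with [converse _], so [!] loops. *)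
- rewrite 2!margin_add_voter 2!contrib_converse (below _ _ _ (bottom_order2_last yx yx)).
  rewrite (contrib_pref (bottom_order_sto _) (bottom_order2_last xy xy)).
  by rewrite opprK addrK.
- move=> w wx wy; rewrite 4!margin_add_voter 4!contrib_converse.
  rewrite (below _ _ _ (bottom_order2_last yx wx)) (below _ _ _ (bottom_order2_out wx wy)).
  rewrite (below _ _ _ (bottom_order2_out wy wx)) (below _ _ _ (bottom_order2_last xy wy)).
  by split; lia.
Qed.

Lemma pair_boost_iter Q x y k :
  valid_profile Q -> x != y -> f Q = [set x; y] ->
  exists Q', [/\ valid_profile Q', f Q' = [set x; y],
    margin Q' x y = margin Q x y &
    forall w, w != x -> w != y ->
      margin Q' x w = (margin Q x w + (2 * k)%:Z)%R /\
      margin Q' y w = (margin Q y w + (2 * k)%:Z)%R].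
Proof.
move=> vQ xy fxy; elim: k => [|k [Q1 [vQ1 fQ1 mxy1 mw1]]].
  by exists Q; split=> // w _ _; rewrite !addr0.
have [Q2 [vQ2 fQ2 mxy2 mw2]] := pair_boost vQ1 xy fQ1.
exists Q2; split=> // [|w wx wy]; first by rewrite mxy2.
by have [-> ->] := mw2 w wx wy; have [-> ->] := mw1 w wx wy; split; lia.
Qed.

End Strategyproofness.

Section Condorcet.
Variables (A : finType) (f : profile A -> {set A}).
Hypotheses (f_pw : pairwise_SCC f) (f_ni : set_non_imposing f)
           (f_hom : homogeneous f) (f_sp : strategyproof f).
Implicit Types (P Q R : profile A) (x y : A).

(* Doubling both profiles makes the margin difference even. *)
Lemma singleton_monotone P Q x :
  valid_profile P -> valid_profile Q -> f P = [set x] ->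
  (forall w, margin P x w <= margin Q x w)%R -> f Q = [set x].
Proof.
move=> vP vQ fx le_PQ.
have v2P := copies_valid vP (isT : 0 < 2); have v2Q := copies_valid vQ (isT : 0 < 2).
have f2P : f (copies 2 P) = [set x] by rewrite f_hom.
have [||P' [vP' fP' mP']] := singleton_shift f_pw f_sp
  (E := fun u v => margin Q u v - margin P u v)%R (copies 2 P) _ _ v2P f2P.
- by move=> u v; rewrite (margin_skew Q u v) (margin_skew P u v); lia.
- by move=> w; rewrite subr_ge0.
rewrite -(f_hom vQ (isT : 0 < 2)) -fP'; apply: f_pw => // u v.
by rewrite mP' !margin_copies //; lia.
Qed.

Lemma condorcet_winner_singleton R x :
  valid_profile R -> condorcet_winner R x -> f R = [set x].
Proof.
move=> vR x_cw.
have [R0 [vR0 fR0]] : exists R0, valid_profile R0 /\ f R0 = [set x].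
  by apply: f_ni; apply/set0Pn; exists x; exact: set11.
have K_gt0 := voters_gt0 vR0.
rewrite -(f_hom vR K_gt0); apply: singleton_monotone vR0 (copies_valid vR K_gt0) fR0 _ => w.
rewrite margin_copies //; have [->|wx] := eqVneq w x; first by rewrite !margin_diag mulr0.
have := x_cw w wx; rewrite /majority_pref; have := margin_le_size R0 x w; nia.
Qed.

Lemma singleton_condorcet_winner R x :
  valid_profile R -> f R = [set x] -> condorcet_winner R x.
Proof.
move=> vR fx y yx; rewrite /majority_pref ltNge; apply/negP => xy_le0.
have xy : x != y by rewrite eq_sym.
have [Q0 [vQ0 fQ0]] : exists Q0, valid_profile Q0 /\ f Q0 = [set x; y].
  by apply: f_ni; apply/set0Pn; exists x; exact: set21.
have [Q [vQ fQ mxy mw]] :=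
  pair_boost_iter f_pw f_sp (size (voters Q0) + size (voters R)) vQ0 xy fQ0.
have beat w : w != x -> w != y -> (margin R x w <= margin Q x w)%R /\ (0 < margin Q y w)%R.
  move=> wx wy; have [-> ->] := mw w wx wy.
  have := margin_le_size R x w; have := voters_gt0 vQ0.
  rewrite (margin_skew Q0 x w) (margin_skew Q0 y w).
  by have := margin_le_size Q0 w x; have := margin_le_size Q0 w y; lia.
have [xy_lt0 | xy_ge0] := ltrP (margin Q x y) 0.
  suff : f Q = [set y] by rewrite fQ => /set2_eq1/eqP; rewrite (negbTE xy).
  apply: condorcet_winner_singleton vQ _ => w wy; rewrite /majority_pref.
  have [-> | wx] := eqVneq w x; last exact: (beat w wx wy).2.
  by rewrite margin_skew oppr_gt0.
suff : f Q = [set x] by rewrite fQ => /set2_eq1/eqP; rewrite (negbTE xy).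
apply: singleton_monotone vR vQ fx _ => w.
have [-> | wx] := eqVneq w x; first by rewrite !margin_diag.
have [-> | wy] := eqVneq w y; first exact: le_trans xy_le0 xy_ge0.
exact: (beat w wx wy).1.
Qed.

End Condorcet.

Theorem lemma13 (A : finType) (f : profile A -> {set A}) :
  is_SCC f -> pairwise_SCC f -> set_non_imposing f -> homogeneous f ->
  strategyproof f -> strongly_condorcet_consistent f.
Proof.
(* Non-emptiness of the values is never used. *)
move=> _ f_pw f_ni f_hom f_sp R vR x; split.
- exact: singleton_condorcet_winner.
- exact: condorcet_winner_singleton.
Qed.
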